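(* Let $g:\mathbb R\to\mathbb R$ be a $\chi$-integrable odd function and define $h(\omega)=\int_{\mathbb R}g(z)c(\omega,z)e^{2V(\omega)}\chi(dz)$. Then for every $\varphi\in\mathcal C$, $$(h,\varphi)_\pi=-\frac12\mathbb M\int_{\mathbb R}g(z)\big(T_z\varphi-\varphi\big)c(\cdot,z)\chi(dz).$$
   Context: $(\Omega,\mathcal G,\mu)$ is a probability space with an ergodic, jointly measurable group $\{\tau_x\}_{x\in\mathbb R}$ of measure-preserving maps; $\mathbb M$ is expectation under $\mu$; $T_x\varphi(\omega)=\varphi(\tau_x\omega)$. $\mathcal C=\mathrm{Span}\{f\star\phi:f\in L^\infty(\Omega),\phi\in C_c^\infty(\mathbb R)\}$, $f\star\phi(\omega)=\int f(\tau_x\omega)\phi(x)dx$. $\chi$ is a symmetric Lévy measure on $\mathbb R$ ($\chi(dz)=\chi(-dz)$), $c:\Omega\times\mathbb R\to[0,\infty)$ is bounded measurable with $c(\tau_z\omega,-z)=c(\omega,z)$ for $\mu$-a.e. $\omega$ and $\chi$-a.e. $z$; $V\in L^\infty(\Omega)$, normalized so that $\pi=e^{-2V}\mu$ is a probability, and $(f,g)_\pi=\mathbb M[fge^{-2V}]$. *)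

From HB Require Import structures.
From mathcomp Require Import all_boot all_order all_algebra.
From mathcomp Require Import all_classical all_reals all_analysis.
Set Implicit Arguments. Unset Strict Implicit. Unset Printing Implicit Defensive.
Import Order.TTheory GRing.Theory Num.Theory.
Import numFieldNormedType.Exports.
Local Open Scope classical_set_scope.
Local Open Scope ring_scope.

Section Defs.
Context (R : realType).

Definition levy_measure (chi : {measure set R -> \bar R}) : Prop :=
  chi [set 0] = 0%E /\
  (\int[chi]_z (Num.min 1 (z ^+ 2))%:E < +oo)%E.

Definition symmetric_measure (chi : {measure set R -> \bar R}) : Prop :=
  forall A : set R, measurable A -> chi [set - z | z in A] = chi A.

Definition smooth_compact (p : R -> R) : Prop :=
  (forall (n : nat) (x : R), derivable (derive1n n p) x 1) /\
  (exists K : R, forall x : R, K < `|x| -> p x = 0).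

Definition conv d (Omega : measurableType d) (tau : R -> Omega -> Omega)
  (f : Omega -> R) (p : R -> R) : Omega -> R :=
  fun w => Rintegral lebesgue_measure setT (fun x => f (tau x w) * p x).

(* bounded measurable representative of an L^infty class *)
Definition bounded_measurable d (Omega : measurableType d) (f : Omega -> R) : Prop :=
  measurable_fun setT f /\ exists M : R, forall w, `|f w| <= M.

(* the core  C = Span { f * phi : f in L^infty(Omega), phi in C_c^infty(R) } *)
Definition in_core d (Omega : measurableType d) (tau : R -> Omega -> Omega)
  (phi : Omega -> R) : Prop :=
  exists (n : nat) (a : 'I_n -> R) (f : 'I_n -> Omega -> R) (p : 'I_n -> R -> R),
    (forall i, bounded_measurable (f i)) /\
    (forall i, smooth_compact (p i)) /\
    phi = (fun w => \sum_(i < n) a i * conv tau (f i) (p i) w).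

End Defs.

From Pilot Require Import Defs.
From HB Require Import structures.
From mathcomp Require Import all_boot all_order all_algebra.
From mathcomp Require Import all_classical all_reals all_analysis.
From mathcomp Require Import measurable_realfun lebesgue_integral_fubini ring.
Set Implicit Arguments. Unset Strict Implicit. Unset Printing Implicit Defensive.
Import Order.TTheory GRing.Theory Num.Theory.
Import numFieldNormedType.Exports.
Local Open Scope classical_set_scope.
Local Open Scope ring_scope.

(* The weights [e^{2V}] and [e^{-2V}] cancel, so the left-hand side is
   [A = M[phi * int g(z) c(.,z) chi(dz)]]. The point is the identity
   [M int g(z) phi(tau_z w) c(w,z) chi(dz) = - A]: the symmetry of [c] rewrites
   [c(w,z)] as [c(tau_z w,-z)]; the reflection [z -> -z], which preserves the
   symmetric measure [chi] and flips the sign of the odd [g], turns the integrand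
   into [-g(z) phi(tau_{-z} w) c(tau_{-z} w, z)]; Fubini and the invariance of [mu]
   under [tau_{-z}] then remove the shift. The right-hand side is thus
   [-1/2 (-A - A) = A]. The Lévy condition on [chi] is only used to make [chi]
   sigma-finite (for Fubini). *)

Lemma bounded_of_normr_le d (T : measurableType d) (R : realType) (D : set T)
    (f : T -> R) (M : R) :
  (forall x, `|f x| <= M) -> [bounded f x | x in D].
Proof.
move=> fM; exists M; split; first exact: num_real.
by move=> x Mx y _; apply: le_trans (fM y) (ltW Mx).
Qed.

Section Rintegral_facts.
Context d (T : measurableType d) (R : realType) (m : {measure set T -> \bar R}).

Lemma EFin_Rintegral (f : T -> R) : m.-integrable setT (EFin \o f) ->
  (Rintegral m setT f)%:E = (\int[m]_x (f x)%:E)%E.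
Proof. by move=> fi; rewrite /Rintegral fineK// integrable_fin_num. Qed.

Lemma RintegralN (f : T -> R) : m.-integrable setT (EFin \o f) ->
  Rintegral m setT (fun x => - f x) = - Rintegral m setT f.
Proof.
move=> fi; have := RintegralZl (-1) measurableT fi; rewrite mulN1r => <-.
by apply: eq_Rintegral => x _; rewrite mulN1r.
Qed.

Lemma integral_measure_preserving (u : T -> T) (h : T -> \bar R) :
  measurable_fun setT u -> (forall A, measurable A -> m (u @^-1` A) = m A) ->
  measurable_fun setT h -> m.-integrable setT (h \o u) ->
  (\int[m]_x h (u x) = \int[m]_x h x)%E.
Proof.
move=> u_meas u_pres mh hui.
have hui' : m.-integrable (u @^-1` setT) (h \o u) by rewrite preimage_setT.
have := integral_pushforward u_meas mh hui' measurableT; rewrite preimage_setT => <-.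
by apply: eq_measure_integral => A mA _ /=; rewrite /pushforward u_pres.
Qed.

End Rintegral_facts.

Section fiber_integral.
Context (R : realType) d (Omega : measurableType d) (mu : probability Omega R)
  dT (T : measurableType dT) (chi : {sigma_finite_measure set T -> \bar R}).
Variable g : T -> R.
Hypothesis g_int : chi.-integrable setT (fun z => (g z)%:E).

Let mg : measurable_fun setT g.
Proof. by apply/measurable_EFinP; exact: measurable_int g_int. Qed.

Lemma integrableM_bounded (k : T -> R) (M : R) :
  measurable_fun setT k -> (forall z, `|k z| <= M) ->
  chi.-integrable setT (EFin \o (fun z => g z * k z)).
Proof.
move=> mk kM; have := integrableMl measurableT g_int mk (bounded_of_normr_le setT kM).
have -> // : ((fun z => (g z)%:E) \* (EFin \o k))%E = EFin \o (fun z => g z * k z).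
by apply/funext => z; rewrite /= EFinM.
Qed.

Lemma probability_integrable_bounded (k : Omega -> R) (M : R) :
  measurable_fun setT k -> (forall w, `|k w| <= M) ->
  mu.-integrable setT (EFin \o k).
Proof.
move=> mk kM; have := integrableMl measurableT
  (finite_measure_integrable_cst mu 1 measurableT) mk (bounded_of_normr_le setT kM).
have -> // : ((EFin \o cst (1%R : R)) \* (EFin \o k))%E = EFin \o k.
by apply/funext => w; rewrite /= mul1e.
Qed.

Variables (k : Omega * T -> R) (M : R).
Hypotheses (mk : measurable_fun setT k) (kM : forall p, `|k p| <= M).

Let F (p : Omega * T) := (g p.2 * k p)%:E.

Let mF : measurable_fun setT F.
Proof.
apply/measurable_EFinP; apply: measurable_funM => //.
exact: measurableT_comp mg measurable_snd.
Qed.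

Lemma integrable_fiber1 w : chi.-integrable setT (EFin \o (fun z => g z * k (w, z))).
Proof. by apply: (integrableM_bounded (M := M)) => //; exact: measurableT_comp. Qed.

Lemma integrable_fiber2 z : mu.-integrable setT (EFin \o (fun w => g z * k (w, z))).
Proof.
apply: (probability_integrable_bounded (M := `|g z| * M)).
  by apply: measurable_funM => //; exact: measurableT_comp.
by move=> w; rewrite normrM ler_wpM2l.
Qed.

Let integrable_product : (mu \x chi)%E.-integrable setT F.
Proof.
apply/(integrable12ltyP mu chi mF).
have [_ ig] := integrableP _ _ _ g_int.
have M0 : 0 <= M by apply: le_trans (kM (point, point)).
have mabsF : measurable_fun setT (abse \o F) by exact: measurableT_comp.
have inner_le w : (\int[chi]_z `|F (w, z)| <= M%:E * \int[chi]_z `|(g z)%:E|)%E.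
  rewrite -ge0_integralZl//; last by do 2 apply: measurableT_comp => //.
  apply: ge0_le_integral => //.
  - exact: (measurableT_comp mabsF (pair1_measurable w)
      : measurable_fun setT ((abse \o F) \o pair w)).
  - by apply: emeasurable_funM => //; apply: measurableT_comp => //; exact/measurable_EFinP.
  - by move=> z _; rewrite /F /= -EFinM lee_fin normrM mulrC ler_wpM2r.
apply: (@le_lt_trans _ _ (\int[mu]_w (cst (M%:E * \int[chi]_z `|(g z)%:E|)) w)%E).
  apply: ge0_le_integral => //.
  - by move=> w _; exact: integral_ge0.
  - exact: (measurable_fun_fubini_tonelli_F (m2 := chi) (abse \o F) mabsF
      (fun _ => abse_ge0 _)).
rewrite integral_cst//; apply: lte_mul_pinfty.
- by rewrite mule_ge0// integral_ge0.
- by rewrite fin_numM// ge0_fin_numE// integral_ge0.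
- exact: le_lt_trans (probability_le1 mu measurableT) (ltry _).
Qed.

Let fiber_integralE :
  (fun w => (Rintegral chi setT (fun z => g z * k (w, z)))%:E) = fubini_F chi F.
Proof. by apply/funext => w; rewrite /fubini_F EFin_Rintegral//; exact: integrable_fiber1. Qed.

Lemma measurable_fiber_integral :
  measurable_fun setT (fun w => (Rintegral chi setT (fun z => g z * k (w, z)))%:E).
Proof. by rewrite fiber_integralE; exact: measurable_fubini_F integrable_product. Qed.

Lemma integrable_fiber_integral :
  mu.-integrable setT (fun w => (Rintegral chi setT (fun z => g z * k (w, z)))%:E).
Proof. by rewrite fiber_integralE; exact: integrable_fubini_F integrable_product. Qed.

Lemma fubini_fiber_integral :
  (\int[mu]_w (Rintegral chi setT (fun z => g z * k (w, z)))%:E =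
   \int[chi]_z (Rintegral mu setT (fun w => g z * k (w, z)))%:E)%E.
Proof.
have := Fubini integrable_product; rewrite /F /=.
under eq_integral do rewrite -EFin_Rintegral ?integrable_fiber1//.
by under [in RHS]eq_integral do rewrite -EFin_Rintegral ?integrable_fiber2//.
Qed.

End fiber_integral.

Section core_bounded.
Context (R : realType) d (Omega : measurableType d) (tau : R -> Omega -> Omega)
  (tau_joint : measurable_fun setT (fun p : R * Omega => tau p.1 p.2)).

Lemma smooth_compact_continuous (p : R -> R) : smooth_compact p -> continuous p.
Proof.
case=> p_der _ x; have := p_der 0%N x; rewrite derive1n0 => /derivable1_diffP.
exact: differentiable_continuous.
Qed.

Lemma smooth_compact_integrable (p : R -> R) : smooth_compact p ->
  (@lebesgue_measure R).-integrable setT (EFin \o p).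
Proof.
move=> sp; have cp := smooth_compact_continuous sp; case: sp => _ [K pK].
pose A := `[- `|K|, `|K|]%classic.
have /integrableP[_ pA] : (@lebesgue_measure R).-integrable A (EFin \o p).
  apply: continuous_compact_integrable; first exact: segment_compact.
  exact: continuous_subspaceT.
apply/integrableP; split; first by apply/measurable_EFinP; exact: continuous_measurable_fun.
suff -> : (fun x => `|(EFin \o p) x|)%E = ((fun x => `|(EFin \o p) x|) \_ A)%E.
  by rewrite -integral_mkcond.
apply/funext => x; rewrite /patch; case: ifPn => // /negP xA.
rewrite /= pK ?normr0// ltNge; apply/negP => xK; apply: xA.
by apply/mem_set; rewrite /A /= in_itv /= -ler_norml (le_trans xK (ler_norm K)).
Qed.

Lemma conv_bounded_measurable (f : Omega -> R) (p : R -> R) :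
  bounded_measurable f -> smooth_compact p -> bounded_measurable (Defs.conv tau f p).
Proof.
move=> [mf [Mf fM]] sp; have ip := smooth_compact_integrable sp.
have Mf0 : 0 <= Mf by apply: le_trans (fM point).
pose k (q : Omega * R) := f (tau q.2 q.1).
have mk : measurable_fun setT k.
  apply: measurableT_comp mf _.
  exact: (measurableT_comp tau_joint (measurable_fun_pair measurable_snd measurable_fst)
    : measurable_fun setT ((fun p : R * Omega => tau p.1 p.2) \o (fun q => (q.2, q.1)))).
have kM q : `|k q| <= Mf by exact: fM.
have -> : Defs.conv tau f p =
    fun w => Rintegral lebesgue_measure setT (fun z => p z * k (w, z)).
  by apply/funext => w; apply: eq_Rintegral => z _; rewrite mulrC.
(* Fubini's measurability statement needs some probability on [Omega]; a Dirac mass does. *)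
split; first by apply/measurable_EFinP; exact: (measurable_fiber_integral \d_point ip mk kM).
have [_ p_fin] := integrableP _ _ _ ip.
exists (Mf * fine (\int[lebesgue_measure]_x `|(EFin \o p) x|)) => w.
have iw := integrable_fiber1 ip mk kM w.
rewrite -lee_fin EFin_normr_Rintegral// EFinM fineK ?ge0_fin_numE ?integral_ge0//.
apply: le_trans (le_abse_integral _ _ (measurable_int _ iw)) _ => //.
rewrite -ge0_integralZl ?lee_fin//; last first.
  by apply: measurableT_comp => //; exact: measurable_int ip.
apply: ge0_le_integral => //.
- by apply: measurableT_comp => //; exact: measurable_int iw.
- apply: emeasurable_funM => //; apply: measurableT_comp => //; exact: measurable_int ip.
- by move=> z _; rewrite /= -EFinM lee_fin normrM mulrC ler_wpM2r.
Qed.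

Lemma in_core_bounded_measurable (phi : Omega -> R) :
  in_core tau phi -> bounded_measurable phi.
Proof.
move=> [n [a [f [p [bf [sp ->]]]]]].
have bconv i := conv_bounded_measurable (bf i) (sp i).
have [B HB] := choice (fun i => (bconv i).2).
split; first by apply: measurable_sum => i; apply: measurable_funM => //; exact: (bconv i).1.
exists (\sum_(i < n) `|a i| * B i) => w.
apply: le_trans (ler_norm_sum _ _ _) _.
by apply: ler_sum => i _; rewrite normrM ler_wpM2l.
Qed.

End core_bounded.

Section levy_sigma_finite.
Context (R : realType) (chi : {measure set R -> \bar R}).
Hypothesis chi_levy : levy_measure chi.

Let away (e : R) := [set z : R | e <= `|z|].

Let measurable_away e : measurable (away e).
Proof.
have := @normr_measurable R setT measurableT _ (measurable_itv `[e, +oo[).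
by rewrite setTI; congr measurable; apply/seteqP; split => z /=; rewrite in_itv /= andbT.
Qed.

Lemma levy_measure_away_lty (e : R) : 0 < e <= 1 -> (chi (away e) < +oo)%E.
Proof.
case/andP=> e0 e1; case: chi_levy => _ levy_int.
have : ((e ^+ 2)%:E * chi (away e) <= \int[chi]_z (Num.min 1 (z ^+ 2))%:E)%E.
  rewrite -(setIT (away e)) -integral_indic// -ge0_integralZl//; last 2 first.
  - by apply: measurableT_comp => //; exact: measurable_indic.
  - by rewrite lee_fin exprn_ge0// ltW.
  apply: ge0_le_integral => //.
  - move=> z _; rewrite -EFinM lee_fin; apply: mulr_ge0; first by rewrite exprn_ge0// ltW.
    by rewrite /indic; case: (_ \in _).
  - by apply: emeasurable_funM => //; apply: measurableT_comp => //.
  - apply/measurable_EFinP; apply: measurable_minr => //; exact: exprn_measurable.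
  move=> z _; rewrite -EFinM lee_fin /indic.
  case: (boolP (z \in away e)) => [/set_mem ez|_] /=.
    rewrite mulr1 le_min expr_le1 ?e1 ?(ltW e0)//=.
    by rewrite -(real_normK (num_real z)) ler_sqr ?nnegrE ?normr_ge0// ltW.
  by rewrite mulr0 le_min ler01 sqr_ge0.
move=> /le_lt_trans /(_ levy_int) lty; rewrite ltNge leye_eq; apply/negP => /eqP chi_oo.
by move: lty; rewrite chi_oo gt0_muley ?ltxx// lte_fin exprn_gt0.
Qed.

Lemma levy_measure_sigma_finite : sigma_finite setT chi.
Proof.
case: chi_levy => chi0 _.
exists (fun n => [set 0] `|` away (n.+1%:R)^-1).
  apply/seteqP; split => // z _.
  have [->|z0] := eqVneq z 0; first by exists 0%N => //; left.
  exists (Num.truncn (`|z|^-1)) => //; right; rewrite /away /=.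
  have zp : 0 < `|z| by rewrite normr_gt0.
  rewrite -[X in _ <= X](invrK `|z|) lef_pV2 ?posrE ?invr_gt0//.
  exact/ltW/truncnS_gt.
move=> n; split; first exact: measurableU.
apply: le_lt_trans (measureU2 _ _ _) _ => //.
have chi0_lty : (chi [set (0%R : R)] < +oo)%E by rewrite chi0 ltry.
apply: lte_add_pinfty chi0_lty (levy_measure_away_lty _).
by rewrite invr_gt0 ltr0n invf_le1 ?ler1n.
Qed.

End levy_sigma_finite.

Section sigma_finite_measure_of.
Context (R : realType) (chi : {measure set R -> \bar R}) (chi_sf : sigma_finite setT chi).

(* [chi] itself, indexed by a proof of sigma-finiteness so that it can carry the
   corresponding instance. *)
Definition sigma_finite_measure_of (_ : sigma_finite setT chi) : set R -> \bar R := chi.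

HB.instance Definition _ := Measure.on (sigma_finite_measure_of chi_sf).
HB.instance Definition _ :=
  @Measure_isSigmaFinite.Build _ _ _ (sigma_finite_measure_of chi_sf) chi_sf.

End sigma_finite_measure_of.

Section odd_jump.
Context (R : realType) d (Omega : measurableType d) (mu : probability Omega R)
  (chi : {sigma_finite_measure set R -> \bar R}).
Variable g : R -> R.
Hypothesis g_int : chi.-integrable setT (fun z => (g z)%:E).
Hypothesis g_odd : forall z, g (- z) = - g z.
Hypothesis chi_reflect :
  forall A : set R, measurable A -> chi ((fun z => - z) @^-1` A) = chi A.
Variable tau : R -> Omega -> Omega.
Hypothesis tau_joint : measurable_fun setT (fun p : R * Omega => tau p.1 p.2).
Hypothesis tau_pres : forall x (A : set Omega), measurable A -> mu (tau x @^-1` A) = mu A.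
Variables (c : Omega -> R -> R) (Mc : R).
Hypothesis c_meas : measurable_fun setT (fun p : Omega * R => c p.1 p.2).
Hypothesis c_bd : forall w z, `|c w z| <= Mc.
Hypothesis c_sym : {ae mu, forall w, {ae chi, forall z, c (tau z w) (- z) = c w z}}.
Variables (phi : Omega -> R) (Mp : R).
Hypothesis phi_meas : measurable_fun setT phi.
Hypothesis phi_bd : forall w, `|phi w| <= Mp.

Let measurable_shift (s : Omega * R -> R) : measurable_fun setT s ->
  measurable_fun setT (fun p => tau (s p) p.1).
Proof.
move=> ms; exact: (measurableT_comp tau_joint (measurable_fun_pair ms measurable_fst)
  : measurable_fun setT ((fun p : R * Omega => tau p.1 p.2) \o (fun p => (s p, p.1)))).
Qed.

Let measurable_weight (a b : Omega * R -> Omega) (s : Omega * R -> R) :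
  measurable_fun setT a -> measurable_fun setT b -> measurable_fun setT s ->
  measurable_fun setT (fun p => phi (a p) * c (b p) (s p)).
Proof.
move=> ma mb ms; apply: measurable_funM; first exact: measurableT_comp phi_meas ma.
exact: (measurableT_comp c_meas (measurable_fun_pair mb ms)
  : measurable_fun setT ((fun p : Omega * R => c p.1 p.2) \o (fun p => (b p, s p)))).
Qed.

Let normr_weight_le w w' z : `|phi w * c w' z| <= Mp * Mc.
Proof. by rewrite normrM ler_pM// (le_trans _ (phi_bd w)). Qed.

Local Notation weight_le := (fun=> normr_weight_le _ _ _).

Let shifted (p : Omega * R) := phi (tau p.2 p.1) * c p.1 p.2.
Let unshifted (p : Omega * R) := phi p.1 * c p.1 p.2.
Let shifted_sym (p : Omega * R) := phi (tau p.2 p.1) * c (tau p.2 p.1) (- p.2).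
Let reflected (p : Omega * R) := phi (tau (- p.2) p.1) * c (tau (- p.2) p.1) p.2.

Let measurable_oppr_snd : measurable_fun setT (fun p : Omega * R => - p.2).
Proof. exact: measurable_funN measurable_snd. Qed.

Let measurable_shifted : measurable_fun setT shifted.
Proof.
exact: (measurable_weight (measurable_shift measurable_snd) measurable_fst measurable_snd).
Qed.
Let measurable_unshifted : measurable_fun setT unshifted.
Proof. exact: (measurable_weight measurable_fst measurable_fst measurable_snd). Qed.
Let measurable_shifted_sym : measurable_fun setT shifted_sym.
Proof.
exact: (measurable_weight (measurable_shift measurable_snd)
  (measurable_shift measurable_snd) measurable_oppr_snd).
Qed.
Let measurable_reflected : measurable_fun setT reflected.
Proof.
exact: (measurable_weight (measurable_shift measurable_oppr_snd)
  (measurable_shift measurable_oppr_snd) measurable_snd).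
Qed.

Let fiber (k : Omega * R -> R) w := Rintegral chi setT (fun z => g z * k (w, z)).

Let integral_fiber_shifted_sym :
  (\int[mu]_w (fiber shifted w)%:E = \int[mu]_w (fiber shifted_sym w)%:E)%E.
Proof.
apply: ae_eq_integral => //.
- exact: (measurable_fiber_integral mu g_int measurable_shifted weight_le).
- exact: (measurable_fiber_integral mu g_int measurable_shifted_sym weight_le).
apply: filterS c_sym => w csym_w _; congr (_%:E); congr fine.
apply: ae_eq_integral => //.
- exact: measurable_int (integrable_fiber1 g_int measurable_shifted weight_le w).
- exact: measurable_int (integrable_fiber1 g_int measurable_shifted_sym weight_le w).
by apply: filterS csym_w => z csym_wz _; rewrite /shifted /shifted_sym /= csym_wz.
Qed.

Let fiber_shifted_sym w : fiber shifted_sym w = - fiber reflected w.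
Proof.
rewrite /fiber -RintegralN; last first.
  exact: (integrable_fiber1 g_int measurable_reflected weight_le w).
have mneg : measurable_fun (setT : set R) -%R by exact: oppr_measurable.
pose h := EFin \o (fun z => g z * shifted_sym (w, z)).
have hE : h \o -%R = EFin \o (fun z => g z * - reflected (w, z)).
  by apply/funext => z; rewrite /h /= /shifted_sym /reflected /= g_odd opprK mulNr mulrN.
have mh : measurable_fun setT h.
  exact: measurable_int (integrable_fiber1 g_int measurable_shifted_sym weight_le w).
have ih : chi.-integrable setT (h \o -%R).
  rewrite hE; apply: (integrableM_bounded g_int (M := Mp * Mc)) => [|z].
    by apply: measurableT_comp; [exact: mneg|exact: measurableT_comp measurable_reflected _].
  by rewrite normrN; exact: normr_weight_le.
rewrite /Rintegral; congr fine.
apply: eq_trans (esym (integral_measure_preserving mneg chi_reflect mh ih)) _.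
by apply: eq_integral => z _; rewrite /h /= /shifted_sym /reflected /= g_odd opprK mulNr.
Qed.

Let integral_fiber_reflected :
  (\int[mu]_w (fiber reflected w)%:E = \int[mu]_w (fiber unshifted w)%:E)%E.
Proof.
rewrite /fiber (fubini_fiber_integral mu g_int measurable_reflected weight_le).
rewrite (fubini_fiber_integral mu g_int measurable_unshifted weight_le).
apply: eq_integral => z _; congr (_%:E); congr fine.
have mtau : measurable_fun setT (tau (- z)).
  exact: (measurableT_comp tau_joint (pair1_measurable (- z))
    : measurable_fun setT ((fun p : R * Omega => tau p.1 p.2) \o pair (- z))).
apply: integral_measure_preserving mtau (tau_pres (- z)) _ _.
- exact: measurable_int (integrable_fiber2 mu g measurable_unshifted weight_le z).
- exact: (integrable_fiber2 mu g measurable_reflected weight_le z).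
Qed.

Lemma integral_fiber_shifted :
  (\int[mu]_w (fiber shifted w)%:E = - \int[mu]_w (fiber unshifted w)%:E)%E.
Proof.
rewrite integral_fiber_shifted_sym.
under eq_integral => w _ do rewrite fiber_shifted_sym EFinN.
rewrite integralN ?integral_fiber_reflected//.
exact/integrable_add_def/(integrable_fiber_integral mu g_int measurable_reflected weight_le).
Qed.

Variable V : Omega -> R.

Let weight_cancel w :
  Rintegral chi setT (fun z => g z * c w z * expR (2 * V w)) * phi w * expR (- 2 * V w) =
  fiber unshifted w.
Proof.
have mcw : measurable_fun setT (c w).
  exact: (measurableT_comp c_meas (pair1_measurable w)
    : measurable_fun setT ((fun p : Omega * R => c p.1 p.2) \o pair w)).
have igc := integrableM_bounded g_int mcw (c_bd w).
rewrite RintegralZr// /fiber /unshifted /=.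
under [in RHS]eq_Rintegral do rewrite mulrCA.
rewrite RintegralZl// -mulrA mulrCA -mulrA -expRD mulNr addrN expR0 mulr1.
by rewrite mulrC.
Qed.

Let fiber_increment w :
  Rintegral chi setT (fun z => g z * (phi (tau z w) - phi w) * c w z) =
  fiber shifted w - fiber unshifted w.
Proof.
rewrite -RintegralB//.
- by apply: eq_Rintegral => z _; rewrite /shifted /unshifted /=; ring.
- exact: (integrable_fiber1 g_int measurable_shifted weight_le w).
- exact: (integrable_fiber1 g_int measurable_unshifted weight_le w).
Qed.

Lemma odd_jump_identity :
  let h := fun w => Rintegral chi setT (fun z => g z * c w z * expR (2 * V w)) in
  (\int[mu]_w (h w * phi w * expR (- 2 * V w))%:E =
   (- (1 / 2))%:E *
   \int[mu]_w (Rintegral chi setT (fun z => g z * (phi (tau z w) - phi w) * c w z))%:E)%E.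
Proof.
move=> h; under eq_integral do rewrite weight_cancel.
under [in RHS]eq_integral do rewrite fiber_increment EFinB.
have i_unshifted := integrable_fiber_integral mu g_int measurable_unshifted weight_le.
have i_shifted := integrable_fiber_integral mu g_int measurable_shifted weight_le.
rewrite integralB_EFin//.
rewrite integral_fiber_shifted -(fineK (integrable_fin_num measurableT i_unshifted)).
by rewrite -EFinN -EFinB -EFinM; congr (_%:E); field.
Qed.

End odd_jump.

Theorem mainTheorem14 (R : realType) (d : measure_display)
  (Omega : measurableType d) (mu : probability Omega R)
  (tau : R -> Omega -> Omega)
  (tau0 : forall w, tau 0 w = w)
  (tauD : forall x y w, tau (x + y) w = tau x (tau y w))
  (tau_meas : forall x, measurable_fun setT (tau x))
  (tau_pres : forall x (A : set Omega), measurable A -> mu (tau x @^-1` A) = mu A)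
  (tau_joint : measurable_fun setT (fun p : R * Omega => tau p.1 p.2))
  (tau_erg : forall A : set Omega, measurable A ->
     (forall x, tau x @^-1` A = A) -> mu A = 0%E \/ mu A = 1%E)
  (chi : {measure set R -> \bar R})
  (chi_levy : levy_measure chi) (chi_sym : symmetric_measure chi)
  (c : Omega -> R -> R)
  (c_meas : measurable_fun setT (fun p : Omega * R => c p.1 p.2))
  (c_ge0 : forall w z, 0 <= c w z)
  (c_bdd : exists M : R, forall w z, c w z <= M)
  (c_sym : {ae mu, forall w, {ae chi, forall z, c (tau z w) (- z) = c w z}})
  (V : Omega -> R)
  (V_meas : measurable_fun setT V)
  (V_bdd : exists M : R, {ae mu, forall w, `|V w| <= M})
  (V_norm : (\int[mu]_w (expR (- 2 * V w))%:E = 1)%E)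
  (g : R -> R)
  (g_int : chi.-integrable setT (fun z => (g z)%:E))
  (g_odd : forall z, g (- z) = - g z)
  (phi : Omega -> R) (phi_core : in_core tau phi) :
  let h := fun w => Rintegral chi setT (fun z => g z * c w z * expR (2 * V w)) in
  (\int[mu]_w (h w * phi w * expR (- 2 * V w))%:E =
   (- (1 / 2))%:E *
   \int[mu]_w (Rintegral chi setT (fun z => g z * (phi (tau z w) - phi w) * c w z))%:E)%E.
Proof.
have chi_sf := levy_measure_sigma_finite chi_levy.
have chi_reflect (A : set R) : measurable A -> chi (-%R @^-1` A) = chi A.
  move=> mA; rewrite -(chi_sym A mA); congr (chi _); apply/seteqP; split => z /=.
    by move=> Az; exists (- z); rewrite ?opprK.
  by move=> [x Ax <-]; rewrite opprK.
have [M cM] := c_bdd.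
have c_bd w z : `|c w z| <= M by rewrite ger0_norm.
have [phi_meas [Mp phi_bd]] := in_core_bounded_measurable tau_joint phi_core.
exact: (odd_jump_identity (chi := sigma_finite_measure_of chi_sf)
  g_int g_odd chi_reflect tau_joint tau_pres c_meas c_bd c_sym phi_meas phi_bd V).
Qed.
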